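(* Let $\delta\in\mathbb R$ and $\nu\in[0,\pi)$, and consider the equation $\mathcal P(\sigma;\delta,\nu)=0$ for $\sigma\in[0,2\pi)$. If $(\delta,\nu)\in\Omega_+$, this equation has exactly four distinct roots in $[0,2\pi)$. If $(\delta,\nu)\in\Omega_-$, it has exactly two distinct roots in $[0,2\pi)$. Moreover, if $(\delta,\nu)\notin\gamma_+\cup\gamma_-$, then every root $\sigma$ satisfies $\mathcal P'(\sigma;\delta,\nu)\neq 0$. Finally, if $\sigma$ is a root with $\mathcal P'(\sigma;\delta,\nu)=\mathcal P''(\sigma;\delta,\nu)=0$, then $\nu=0$, $\sin\sigma=0$ and $\mathcal P'''(\sigma;\delta,\nu)=-3\cos\sigma\neq0$.
   Context: $\mathcal P(\sigma;\delta,\nu):=\delta\sin(2\sigma+\nu)-\sin\sigma$; primes on $\mathcal P$ denote derivatives with respect to $\sigma$. Let $\gamma(\delta,\nu):=(4\delta^2-1)^3-27\delta^2\sin^2\nu$. Define $\Omega_\pm:=\{(\delta,\nu)\in\mathbb R\times[0,\pi):\pm\gamma(\delta,\nu)>0\}$ and $\gamma_\pm:=\{(\delta,\nu)\in\mathbb R\times[0,\pi):\gamma(\delta,\nu)=0,\ \pm\delta>0\}$. *)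

From Stdlib Require Import Reals Lra List.
Open Scope R_scope.

Definition P (d nu s : R) : R := d * sin (2 * s + nu) - sin s.

Definition P1 (d nu s : R) : R := 2 * d * cos (2 * s + nu) - cos s.
Definition P2 (d nu s : R) : R := (- 4 * d) * sin (2 * s + nu) + sin s.
Definition P3 (d nu s : R) : R := - (8 * d * cos (2 * s + nu)) + cos s.

Lemma P_deriv d nu s : derivable_pt_lim (fun x => P d nu x) s (P1 d nu s).
Proof.
  unfold P, P1.
  replace (2 * d * cos (2 * s + nu) - cos s)
    with (d * (cos (2 * s + nu) * (2 * 1 + 0)) - cos s) by ring.
  apply derivable_pt_lim_minus; [| apply derivable_pt_lim_sin].
  apply derivable_pt_lim_scal.
  apply (derivable_pt_lim_comp (fun x => 2 * x + nu) sin).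
  - apply derivable_pt_lim_plus; [apply derivable_pt_lim_scal, derivable_pt_lim_id
                                 | apply derivable_pt_lim_const].
  - apply derivable_pt_lim_sin.
Qed.

Lemma P1_deriv d nu s : derivable_pt_lim (fun x => P1 d nu x) s (P2 d nu s).
Proof.
  unfold P1, P2.
  replace ((- 4 * d) * sin (2 * s + nu) + sin s)
    with ((2 * d) * (- sin (2 * s + nu) * (2 * 1 + 0)) - - sin s) by ring.
  apply derivable_pt_lim_minus; [| apply derivable_pt_lim_cos].
  apply derivable_pt_lim_scal.
  apply (derivable_pt_lim_comp (fun x => 2 * x + nu) cos).
  - apply derivable_pt_lim_plus; [apply derivable_pt_lim_scal, derivable_pt_lim_id
                                 | apply derivable_pt_lim_const].
  - apply derivable_pt_lim_cos.
Qed.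

Lemma P2_deriv d nu s : derivable_pt_lim (fun x => P2 d nu x) s (P3 d nu s).
Proof.
  unfold P2, P3.
  replace (- (8 * d * cos (2 * s + nu)) + cos s)
    with ((- 4 * d) * (cos (2 * s + nu) * (2 * 1 + 0)) + cos s) by ring.
  apply derivable_pt_lim_plus; [| apply derivable_pt_lim_sin].
  apply derivable_pt_lim_scal.
  apply (derivable_pt_lim_comp (fun x => 2 * x + nu) sin).
  - apply derivable_pt_lim_plus; [apply derivable_pt_lim_scal, derivable_pt_lim_id
                                 | apply derivable_pt_lim_const].
  - apply derivable_pt_lim_sin.
Qed.

Definition gamma (d nu : R) : R := (4 * d ^ 2 - 1) ^ 3 - 27 * d ^ 2 * (sin nu) ^ 2.

Definition Omega_plus (d nu : R) : Prop := 0 <= nu < PI /\ gamma d nu > 0.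
Definition Omega_minus (d nu : R) : Prop := 0 <= nu < PI /\ gamma d nu < 0.
Definition gamma_plus (d nu : R) : Prop := 0 <= nu < PI /\ gamma d nu = 0 /\ d > 0.
Definition gamma_minus (d nu : R) : Prop := 0 <= nu < PI /\ gamma d nu = 0 /\ d < 0.

Definition exactly_n_roots (f : R -> R) (n : nat) : Prop :=
  exists l : list R,
    length l = n /\ NoDup l /\
    (forall s, In s l <-> (0 <= s < 2 * PI /\ f s = 0)).

(* Write A = 2σ + ν.  Eliminating σ between P = 0 and P' = 0 gives γ(δ, ν) = 0
   (double_root_on_gamma), so off the curves γ_± every root is simple; a root
   with P = P' = P'' = 0 forces sin σ = sin A = 0, hence ν = 0.

   To count roots for 0 < ν < π we cut the period window (-ν/2, -ν/2 + 2π) at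
   the zeros of sin A into four quarters.  There P = sin A · (δ - Q) with
   Q = sin σ / sin A, Q' = Qnum / sin² A and Qnum' = 3 sin σ sin A.  On the first
   quarter Qnum > 0, so Q increases and P has exactly one root for every δ.  On
   the second quarter Qnum changes sign once, Q has a single maximum M < 0, and
   P has two roots if δ < M and none if δ > M.  As P(-δ)(σ + π) = -P(δ)(σ), the
   last two quarters are the first two with δ replaced by -δ.  Finally (M, ν)
   lies on γ = 0, and the sign of γ(δ, ν) is that of δ² - M² (a cubic in δ²
   with a single nonnegative root), which gives four roots in Ω₊ and two in Ω₋.
   The case ν = 0 is read off the factorization P = sin σ (2δ cos σ - 1). *)

From Stdlib Require Import Reals Lra Lia List.
Import ListNotations.
Open Scope R_scope.

Lemma ivt_strict (f : R -> R) (a b : R) :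
  continuity f -> a < b -> f a * f b < 0 -> exists z, a < z < b /\ f z = 0.
Proof.
  intros hf hab hsign.
  destruct (IVT_cor f a b hf (Rlt_le _ _ hab) (Rlt_le _ _ hsign)) as [z [[hza hzb] hz]].
  exists z; split; [split|exact hz].
  - destruct hza as [hza | <-]; [exact hza|]. rewrite hz in hsign; lra.
  - destruct hzb as [hzb | ->]; [exact hzb|]. rewrite hz in hsign; lra.
Qed.

Lemma mvt_increasing (f f' : R -> R) (x y : R) : x < y ->
  (forall t, x <= t <= y -> derivable_pt_lim f t (f' t)) ->
  (forall t, x < t < y -> 0 < f' t) -> f x < f y.
Proof.
  intros hxy hder hpos.
  destruct (MVT_cor2 f f' x y hxy hder) as [c [hmvt hc]].
  assert (0 < f' c * (y - x)) by (apply Rmult_lt_0_compat; [apply hpos, hc | lra]).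
  lra.
Qed.

Lemma mvt_decreasing (f f' : R -> R) (x y : R) : x < y ->
  (forall t, x <= t <= y -> derivable_pt_lim f t (f' t)) ->
  (forall t, x < t < y -> f' t < 0) -> f y < f x.
Proof.
  intros hxy hder hneg.
  destruct (MVT_cor2 f f' x y hxy hder) as [c [hmvt hc]].
  assert (f' c * (y - x) < 0) by (apply Rmult_neg_pos; [apply hneg, hc | lra]).
  lra.
Qed.

Lemma level_set_unique (g : R -> R) (a b v : R) :
  (forall x y, a < x -> x < y -> y < b -> g x <> g y) ->
  forall s r, a < s < b -> a < r < b -> g s = v -> g r = v -> s = r.
Proof.
  intros hinj s r hs hr hgs hgr.
  destruct (Rtotal_order s r) as [h|[h|h]]; [| exact h |]; exfalso.
  - apply (hinj s r); lra.
  - apply (hinj r s); lra.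
Qed.

Definition roots_in (f : R -> R) (a b : R) (l : list R) : Prop :=
  NoDup l /\ forall s, In s l <-> (a < s < b /\ f s = 0).

Lemma roots_in_nil (f : R -> R) (a b : R) :
  (forall s, a < s < b -> f s <> 0) -> roots_in f a b [].
Proof.
  intros hf; split; [constructor|].
  intros s; simpl; split; [intros []|]. intros [hs hz]; exact (hf s hs hz).
Qed.

Lemma roots_in_single (f : R -> R) (a b r : R) : a < r < b -> f r = 0 ->
  (forall s, a < s < b -> f s = 0 -> s = r) -> roots_in f a b [r].
Proof.
  intros hr hfr huniq; split; [repeat constructor; simpl; tauto|].
  intros s; simpl; split.
  - intros [<- | []]; auto.
  - intros [hs hfs]; left; symmetry; auto.
Qed.

Lemma roots_in_app (f : R -> R) (a b c : R) (l1 l2 : list R) :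
  a <= b -> b <= c -> f b <> 0 ->
  roots_in f a b l1 -> roots_in f b c l2 -> roots_in f a c (l1 ++ l2).
Proof.
  intros hab hbc hb [nd1 h1] [nd2 h2]; split.
  - apply NoDup_app; auto. intros x i1 i2.
    apply h1 in i1; apply h2 in i2; lra.
  - intros s; rewrite in_app_iff, h1, h2; split.
    + intros [[hs hz] | [hs hz]]; split; auto; lra.
    + intros [hs hz]. destruct (Rtotal_order s b) as [h | [-> | h]].
      * left; split; auto; lra.
      * contradiction.
      * right; split; auto; lra.
Qed.

Lemma roots_in_translate (f g : R -> R) (t a b : R) (l : list R) :
  (forall x, g (x + t) = - f x) ->
  roots_in f a b l -> roots_in g (a + t) (b + t) (map (fun x => x + t) l).
Proof.
  intros hfg [nd h]; split.
  - apply NoDup_map_NoDup_ForallPairs; auto. intros x y _ _ e; lra.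
  - intros s; rewrite in_map_iff; split.
    + intros [x [<- hx]]. apply h in hx. rewrite hfg. lra.
    + intros [hs hz]. exists (s - t); split; [ring|]. apply h.
      replace s with (s - t + t) in hz by ring. rewrite hfg in hz; lra.
Qed.

Lemma exactly_n_roots_of_window (f : R -> R) (a : R) (l : list R) :
  (forall x, f (x + 2 * PI) = f x) -> -2 * PI < a <= 0 -> f a <> 0 ->
  roots_in f a (a + 2 * PI) l -> exactly_n_roots f (length l).
Proof.
  intros hper ha hfa [nd h].
  set (wrap := fun x => if Rlt_dec x 0 then x + 2 * PI else x).
  exists (map wrap l); split; [apply length_map|split].
  - apply NoDup_map_NoDup_ForallPairs; auto. intros x y ix iy e.
    apply h in ix; apply h in iy. unfold wrap in e.
    destruct (Rlt_dec x 0); destruct (Rlt_dec y 0); lra.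
  - intros s; rewrite in_map_iff; split.
    + intros [x [<- hx]]. apply h in hx. unfold wrap.
      destruct (Rlt_dec x 0); [rewrite hper|]; split; lra.
    + intros [hs hz]. destruct (Rlt_le_dec s (a + 2 * PI)).
      * exists s. unfold wrap. destruct (Rlt_dec s 0); [lra|]. split; auto.
        apply h; split; auto. split; [|lra].
        destruct (Req_dec s a) as [-> | ]; [contradiction | lra].
      * exists (s - 2 * PI).
        assert (hz' : f (s - 2 * PI) = 0)
          by (rewrite <- hper; replace (s - 2 * PI + 2 * PI) with s by ring; exact hz).
        unfold wrap. destruct (Rlt_dec (s - 2 * PI) 0); [|lra]. split; [ring|].
        apply h; split; auto. split; [|lra].
        destruct (Req_dec (s - 2 * PI) a) as [e | ]; [rewrite e in hz'; contradiction | lra].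
Qed.

Lemma P_shift_PI (d nu x : R) : P (-d) nu (x + PI) = - P d nu x.
Proof.
  unfold P. replace (2 * (x + PI) + nu) with ((2 * x + nu) + 2 * INR 1 * PI) by (simpl; ring).
  rewrite sin_period, neg_sin. ring.
Qed.

Lemma P_periodic (d nu x : R) : P d nu (x + 2 * PI) = P d nu x.
Proof.
  unfold P. replace (2 * (x + 2 * PI) + nu) with ((2 * x + nu) + 2 * INR 2 * PI) by (simpl; ring).
  replace (x + 2 * PI) with (x + 2 * INR 1 * PI) by (simpl; ring).
  rewrite !sin_period. ring.
Qed.

Lemma P_continuous (d nu : R) : continuity (P d nu).
Proof. intros x. apply derivable_continuous_pt. exists (P1 d nu x). apply P_deriv. Qed.

(* Discriminant: eliminating σ from P = P' = 0 gives γ(δ, ν) = 0. With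
   A = 2σ + ν, the two equations say δ sin A = sin σ and 2δ cos A = cos σ;
   then δ sin ν = -sin³σ and 4δ² = 4 sin²σ + cos²σ = 1 + 3 sin²σ. *)
Lemma double_root_on_gamma (d nu s : R) :
  P d nu s = 0 -> P1 d nu s = 0 -> gamma d nu = 0.
Proof.
  unfold P, P1, gamma; intros hP hP1.
  set (A := 2 * s + nu) in *.
  assert (hsin : d * sin A = sin s) by lra.
  assert (hcos : 2 * d * cos A = cos s) by lra.
  assert (hnu : d * sin nu = - sin s ^ 3).
  { replace nu with (A - 2 * s) by (unfold A; ring).
    rewrite sin_minus, sin_2a, cos_2a.
    transitivity ((d * sin A) * (cos s * cos s - sin s * sin s)
                  - (2 * d * cos A) * (sin s * cos s)); [ring|].
    rewrite hsin, hcos. ring. }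
  assert (hd2 : 4 * d ^ 2 = 1 + 3 * sin s ^ 2).
  { pose proof (sin2_cos2 A) as hA. pose proof (sin2_cos2 s) as hs. unfold Rsqr in hA, hs.
    transitivity (4 * (d * sin A) ^ 2 + (2 * d * cos A) ^ 2).
    { replace (d ^ 2) with (d ^ 2 * 1) by ring. rewrite <- hA. ring. }
    rewrite hsin, hcos. replace (cos s ^ 2) with (1 - sin s ^ 2) by (rewrite <- hs; ring). ring. }
  replace (27 * d ^ 2 * sin nu ^ 2) with (27 * (d * sin nu) ^ 2) by ring.
  rewrite hnu, hd2. ring.
Qed.

(* The cubic D ↦ (4D - 1)³ - 27 D S (S > 0) changes sign exactly once on
   [0, ∞): if it vanishes at E, its sign at D is the sign of D - E.  Indeed,
   with a = 4D - 1 and b = 4E - 1 > 0,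
   E · ((4D - 1)³ - 27 D S) = (a - b)(ab(a + b) + a² + ab + b²) / 4. *)
Lemma cubic_sign_compare (S E D : R) : 0 < S -> 0 <= E -> 0 <= D ->
  (4 * E - 1) ^ 3 = 27 * E * S ->
  (0 < (4 * D - 1) ^ 3 - 27 * D * S -> E < D) /\
  ((4 * D - 1) ^ 3 - 27 * D * S < 0 -> D < E).
Proof.
  intros hS hE hD hroot.
  set (a := 4 * D - 1). set (b := 4 * E - 1).
  assert (hEpos : 0 < E).
  { destruct hE as [hE | <-]; [exact hE|]. simpl in hroot. lra. }
  assert (hb : 0 < b).
  { assert (0 < b ^ 3) by (unfold b; rewrite hroot; apply Rmult_lt_0_compat; lra).
    destruct (Rle_lt_dec b 0); [|lra]. assert (b ^ 3 <= 0) by (simpl; nra). lra. }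
  assert (hfactor : E * (a ^ 3 - 27 * D * S)
                    = (a - b) * (a * b * (a + b) + a * a + a * b + b * b) / 4).
  { replace (E * (a ^ 3 - 27 * D * S)) with (E * a ^ 3 - D * (27 * E * S)) by ring.
    rewrite <- hroot. fold b.
    replace E with ((b + 1) / 4) by (unfold b; field).
    replace D with ((a + 1) / 4) by (unfold a; field). field. }
  assert (hpos : 0 < a -> 0 < a * b * (a + b) + a * a + a * b + b * b).
  { intros ha. assert (0 < a * b) by nra. nra. }
  split; intros hsign.
  - destruct (Rlt_le_dec E D) as [h | h]; [exact h|]. exfalso.
    destruct (Rle_lt_dec a 0) as [ha | ha].
    + assert (a ^ 3 <= 0) by (simpl; nra).
      assert (0 <= D * S) by (apply Rmult_le_pos; lra). lra.
    + assert (a - b <= 0) by (unfold a, b; lra).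
      specialize (hpos ha).
      assert (0 < E * (a ^ 3 - 27 * D * S)) by (apply Rmult_lt_0_compat; assumption).
      assert ((a - b) * (a * b * (a + b) + a * a + a * b + b * b) <= 0) by nra.
      lra.
  - destruct (Rlt_le_dec D E) as [h | h]; [exact h|]. exfalso.
    assert (ha : 0 < a) by (unfold a, b in *; lra).
    specialize (hpos ha).
    assert (0 <= (a - b) * (a * b * (a + b) + a * a + a * b + b * b))
      by (apply Rmult_le_pos; unfold a, b in *; lra).
    assert (E * (a ^ 3 - 27 * D * S) < 0) by (apply Rmult_pos_neg; assumption).
    lra.
Qed.

Lemma sin_zero_in_period (s : R) : 0 <= s < 2 * PI -> sin s = 0 -> s = 0 \/ s = PI.
Proof.
  intros hs hz. destruct (sin_eq_0_0 s hz) as [k hk]. pose proof PI_RGT_0.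
  assert (h0 : (0 <= k)%Z) by (apply le_IZR; destruct (Rle_lt_dec 0 (IZR k)); [lra | nra]).
  assert (h2 : (k < 2)%Z) by (apply lt_IZR; destruct (Rlt_le_dec (IZR k) 2); [lra | nra]).
  assert (k = 0%Z \/ k = 1%Z) as [-> | ->] by lia; [left | right]; rewrite hk; simpl; ring.
Qed.

(* Where sin(2σ + ν) ≠ 0, P = sin(2σ + ν) · (δ - Q), so the roots of P are the
   solutions of Q(σ) = δ.  Q' = Qnum / sin²(2σ + ν) and Qnum' = 3 sin σ sin(2σ + ν). *)
Definition Q (nu s : R) : R := sin s / sin (2 * s + nu).
Definition Qnum (nu s : R) : R := cos s * sin (2 * s + nu) - 2 * sin s * cos (2 * s + nu).

Lemma P_factor (d nu s : R) :
  sin (2 * s + nu) <> 0 -> P d nu s = sin (2 * s + nu) * (d - Q nu s).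
Proof. intros h. unfold P, Q. field. exact h. Qed.

Lemma root_level (d nu s : R) : sin (2 * s + nu) <> 0 -> P d nu s = 0 -> Q nu s = d.
Proof.
  intros h hz. rewrite (P_factor d nu s h) in hz.
  destruct (Rmult_integral _ _ hz); [contradiction | lra].
Qed.

Lemma sin_affine_deriv (nu s : R) :
  derivable_pt_lim (fun x => sin (2 * x + nu)) s (2 * cos (2 * s + nu)).
Proof.
  replace (2 * cos (2 * s + nu)) with (cos (2 * s + nu) * (2 * 1 + 0)) by ring.
  apply (derivable_pt_lim_comp (fun x => 2 * x + nu) sin).
  - apply derivable_pt_lim_plus; [apply derivable_pt_lim_scal, derivable_pt_lim_id
                                 | apply derivable_pt_lim_const].
  - apply derivable_pt_lim_sin.
Qed.

Lemma cos_affine_deriv (nu s : R) :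
  derivable_pt_lim (fun x => cos (2 * x + nu)) s (- (2 * sin (2 * s + nu))).
Proof.
  replace (- (2 * sin (2 * s + nu))) with (- sin (2 * s + nu) * (2 * 1 + 0)) by ring.
  apply (derivable_pt_lim_comp (fun x => 2 * x + nu) cos).
  - apply derivable_pt_lim_plus; [apply derivable_pt_lim_scal, derivable_pt_lim_id
                                 | apply derivable_pt_lim_const].
  - apply derivable_pt_lim_cos.
Qed.

Lemma Qnum_deriv (nu s : R) : derivable_pt_lim (Qnum nu) s (3 * sin s * sin (2 * s + nu)).
Proof.
  pose proof (derivable_pt_lim_minus _ _ s _ _
    (derivable_pt_lim_mult _ _ s _ _ (derivable_pt_lim_cos s) (sin_affine_deriv nu s))
    (derivable_pt_lim_mult _ _ s _ _
       (derivable_pt_lim_scal sin 2 s _ (derivable_pt_lim_sin s)) (cos_affine_deriv nu s)))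
    as hder.
  match type of hder with derivable_pt_lim _ _ ?l =>
    replace (3 * sin s * sin (2 * s + nu)) with l by (unfold mult_real_fct; ring) end.
  exact hder.
Qed.

Lemma Qnum_continuous (nu : R) : continuity (Qnum nu).
Proof.
  intros x. apply derivable_continuous_pt. exists (3 * sin x * sin (2 * x + nu)). apply Qnum_deriv.
Qed.

Lemma Q_deriv (nu s : R) : sin (2 * s + nu) <> 0 ->
  derivable_pt_lim (Q nu) s (Qnum nu s / sin (2 * s + nu) ^ 2).
Proof.
  intros h.
  pose proof (derivable_pt_lim_div _ _ s _ _ (derivable_pt_lim_sin s) (sin_affine_deriv nu s) h)
    as hder.
  match type of hder with derivable_pt_lim _ _ ?l =>
    replace (Qnum nu s / sin (2 * s + nu) ^ 2) with l by (unfold Qnum, Rsqr; field; exact h) end.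
  exact hder.
Qed.

Lemma Q_increasing (nu x y : R) : x < y ->
  (forall t, x <= t <= y -> sin (2 * t + nu) <> 0) ->
  (forall t, x < t < y -> 0 < Qnum nu t) -> Q nu x < Q nu y.
Proof.
  intros hxy hsin hnum. apply (mvt_increasing _ (fun t => Qnum nu t / sin (2 * t + nu) ^ 2)).
  - exact hxy.
  - intros t ht. apply Q_deriv, hsin, ht.
  - intros t ht. assert (sin (2 * t + nu) <> 0) by (apply hsin; lra).
    apply Rdiv_lt_0_compat; [apply hnum, ht|].
    rewrite <- Rsqr_pow2. apply Rsqr_pos_lt. assumption.
Qed.

Lemma Q_decreasing (nu x y : R) : x < y ->
  (forall t, x <= t <= y -> sin (2 * t + nu) <> 0) ->
  (forall t, x < t < y -> Qnum nu t < 0) -> Q nu y < Q nu x.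
Proof.
  intros hxy hsin hnum. apply (mvt_decreasing _ (fun t => Qnum nu t / sin (2 * t + nu) ^ 2)).
  - exact hxy.
  - intros t ht. apply Q_deriv, hsin, ht.
  - intros t ht. assert (sin (2 * t + nu) <> 0) by (apply hsin; lra).
    apply Rmult_neg_pos; [apply hnum, ht|].
    apply Rinv_0_lt_compat. rewrite <- Rsqr_pow2. apply Rsqr_pos_lt. assumption.
Qed.

Definition cut (nu : R) (k : Z) : R := (IZR k * PI - nu) / 2.

Lemma cut_angle (nu : R) (k : Z) : 2 * cut nu k + nu = IZR k * PI.
Proof. unfold cut. field. Qed.

Lemma P_at_cut (d nu : R) (k : Z) : P d nu (cut nu k) = - sin (cut nu k).
Proof.
  unfold P. rewrite cut_angle, (sin_eq_0_1 (IZR k * PI)) by (exists k; reflexivity). ring.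
Qed.

Section Quarters.

Variable nu : R.
Hypothesis Hnu : 0 < nu < PI.

(* For 0 < ν < π no cut point is a zero of sin (ν is not a multiple of π). *)
Lemma sin_cut_nonzero (k : Z) : sin (cut nu k) <> 0.
Proof.
  intros hz. destruct (sin_eq_0_0 _ hz) as [m hm]. unfold cut in hm.
  pose proof PI_RGT_0.
  assert (hnu : nu = IZR (k - 2 * m) * PI) by (rewrite minus_IZR, mult_IZR; simpl; nra).
  assert (h0 : (0 < k - 2 * m)%Z) by (apply lt_IZR; nra).
  assert (h1 : (k - 2 * m < 1)%Z) by (apply lt_IZR; nra).
  lia.
Qed.

Lemma P_cut_nonzero (d : R) (k : Z) : P d nu (cut nu k) <> 0.
Proof. rewrite P_at_cut. pose proof (sin_cut_nonzero k). lra. Qed.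

Lemma sin_angle_first (s : R) : cut nu 0 < s < cut nu 1 -> 0 < sin (2 * s + nu).
Proof. unfold cut; intros hs. apply sin_gt_0; lra. Qed.

Lemma sin_angle_second (s : R) : cut nu 1 < s < cut nu 2 -> sin (2 * s + nu) < 0.
Proof. unfold cut; intros hs. apply sin_lt_0; lra. Qed.

Lemma sin_pos_second (s : R) : cut nu 1 <= s <= cut nu 2 -> 0 < sin s.
Proof. unfold cut; intros hs. apply sin_gt_0; lra. Qed.

(* First quarter: Qnum is smallest at σ = 0, where it equals sin ν > 0. *)
Lemma Qnum_pos_first (s : R) : cut nu 0 < s < cut nu 1 -> 0 < Qnum nu s.
Proof.
  intros hs. pose proof PI_RGT_0.
  assert (hnum0 : Qnum nu 0 = sin nu)
    by (unfold Qnum; rewrite sin_0, cos_0; replace (2 * 0 + nu) with nu by ring; ring).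
  assert (0 < sin nu) by (apply sin_gt_0; lra).
  assert (hangle : forall t, s <= t <= 0 \/ 0 <= t <= s -> 0 < sin (2 * t + nu))
    by (intros t ht; apply sin_angle_first; unfold cut in *; lra).
  destruct (Rtotal_order s 0) as [hneg | [-> | hpos]].
  - assert (Qnum nu 0 < Qnum nu s); [|lra].
    apply (mvt_decreasing _ (fun t => 3 * sin t * sin (2 * t + nu))); auto using Qnum_deriv.
    intros t ht. assert (sin t < 0) by (apply sin_lt_0_var; unfold cut in *; lra).
    specialize (hangle t ltac:(lra)). nra.
  - lra.
  - assert (Qnum nu 0 < Qnum nu s); [|lra].
    apply (mvt_increasing _ (fun t => 3 * sin t * sin (2 * t + nu))); auto using Qnum_deriv.
    intros t ht. assert (0 < sin t) by (apply sin_gt_0; unfold cut in *; lra).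
    specialize (hangle t ltac:(lra)). nra.
Qed.

(* Hence Q increases on the first quarter, and P, which changes sign there,
   has exactly one root in it, for every δ. *)
Lemma roots_first (d : R) : exists r, roots_in (P d nu) (cut nu 0) (cut nu 1) [r].
Proof.
  pose proof PI_RGT_0.
  assert (hsin0 : sin (cut nu 0) < 0) by (apply sin_lt_0_var; unfold cut; lra).
  assert (hsin1 : 0 < sin (cut nu 1)) by (apply sin_gt_0; unfold cut; lra).
  destruct (ivt_strict (P d nu) (cut nu 0) (cut nu 1)) as [r [hr hzr]].
  - apply P_continuous.
  - unfold cut; lra.
  - rewrite !P_at_cut. nra.
  - exists r. apply roots_in_single; auto.
    intros s hs hzs.
    assert (hsinA : forall t, cut nu 0 < t < cut nu 1 -> sin (2 * t + nu) <> 0)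
      by (intros t ht; pose proof (sin_angle_first t ht); lra).
    apply (level_set_unique (Q nu) (cut nu 0) (cut nu 1) d); auto using root_level.
    intros x y hx hxy hy. apply Rlt_not_eq, Q_increasing; auto.
    + intros t ht. apply hsinA. lra.
    + intros t ht. apply Qnum_pos_first. lra.
Qed.

(* Second quarter: Qnum decreases (Qnum' = 3 sin σ sin(2σ + ν) < 0) from
   2 sin(cut 1) > 0 to -2 sin(cut 2) < 0, so it changes sign exactly once. *)
Lemma Qnum_decreasing_second (x y : R) :
  cut nu 1 <= x -> x < y -> y <= cut nu 2 -> Qnum nu y < Qnum nu x.
Proof.
  intros hx hxy hy.
  apply (mvt_decreasing _ (fun t => 3 * sin t * sin (2 * t + nu))); auto using Qnum_deriv.
  intros t ht. assert (0 < sin t) by (apply sin_pos_second; lra).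
  assert (sin (2 * t + nu) < 0) by (apply sin_angle_second; lra). nra.
Qed.

Lemma Qnum_sign_change_second : exists c, cut nu 1 < c < cut nu 2 /\ Qnum nu c = 0 /\
  (forall s, cut nu 1 < s < c -> 0 < Qnum nu s) /\
  (forall s, c < s < cut nu 2 -> Qnum nu s < 0).
Proof.
  pose proof PI_RGT_0.
  assert (h12 : cut nu 1 < cut nu 2) by (unfold cut; lra).
  assert (hnum1 : Qnum nu (cut nu 1) = 2 * sin (cut nu 1)).
  { unfold Qnum. rewrite cut_angle. replace (IZR 1 * PI) with PI by lra.
    rewrite sin_PI, cos_PI. ring. }
  assert (hnum2 : Qnum nu (cut nu 2) = - 2 * sin (cut nu 2)).
  { unfold Qnum. rewrite cut_angle. replace (IZR 2 * PI) with (2 * PI) by lra.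
    rewrite sin_2PI, cos_2PI. ring. }
  assert (0 < sin (cut nu 1)) by (apply sin_pos_second; lra).
  assert (0 < sin (cut nu 2)) by (apply sin_pos_second; lra).
  destruct (ivt_strict (Qnum nu) (cut nu 1) (cut nu 2)) as [c [hc hzc]];
    [apply Qnum_continuous | exact h12 | rewrite hnum1, hnum2; nra |].
  exists c; repeat split; try lra.
  - intros s hs. rewrite <- hzc. apply Qnum_decreasing_second; lra.
  - intros s hs. rewrite <- hzc. apply Qnum_decreasing_second; lra.
Qed.

Section SecondQuarter.

Variable c : R.
Hypothesis Hc : cut nu 1 < c < cut nu 2.
Hypothesis Hc_zero : Qnum nu c = 0.
Hypothesis Hc_before : forall s, cut nu 1 < s < c -> 0 < Qnum nu s.
Hypothesis Hc_after : forall s, c < s < cut nu 2 -> Qnum nu s < 0.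

Let sin_angle_second_neq (t : R) : cut nu 1 < t < cut nu 2 -> sin (2 * t + nu) <> 0.
Proof. intros ht. pose proof (sin_angle_second t ht). lra. Qed.

Lemma Q_increasing_before (x y : R) : cut nu 1 < x -> x < y -> y <= c -> Q nu x < Q nu y.
Proof.
  intros hx hxy hy. apply Q_increasing; auto.
  - intros t ht. apply sin_angle_second_neq. lra.
  - intros t ht. apply Hc_before. lra.
Qed.

Lemma Q_decreasing_after (x y : R) : c <= x -> x < y -> y < cut nu 2 -> Q nu y < Q nu x.
Proof.
  intros hx hxy hy. apply Q_decreasing; auto.
  - intros t ht. apply sin_angle_second_neq. lra.
  - intros t ht. apply Hc_after. lra.
Qed.

Lemma Q_le_max (s : R) : cut nu 1 < s < cut nu 2 -> Q nu s <= Q nu c.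
Proof.
  intros hs. destruct (Rtotal_order s c) as [h | [-> | h]].
  - left. apply Q_increasing_before; lra.
  - lra.
  - left. apply Q_decreasing_after; lra.
Qed.

Lemma Q_max_negative : Q nu c < 0.
Proof.
  unfold Q, Rdiv. rewrite Rmult_comm. apply Rmult_neg_pos.
  - apply Rinv_lt_0_compat, sin_angle_second, Hc.
  - apply sin_pos_second. lra.
Qed.

(* At σ = c the level δ = Q(c) gives a double root, so (Q(c), ν) lies on γ = 0. *)
Lemma Q_max_on_gamma : gamma (Q nu c) nu = 0.
Proof.
  pose proof (sin_angle_second_neq c Hc) as hsin.
  apply (double_root_on_gamma _ _ c).
  - rewrite P_factor by exact hsin. ring.
  - unfold P1.
    replace (2 * Q nu c * cos (2 * c + nu) - cos c) with (- Qnum nu c / sin (2 * c + nu))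
      by (unfold Q, Qnum; field; exact hsin).
    rewrite Hc_zero. field. exact hsin.
Qed.

(* Below the maximum P is positive at c and negative at both cut points:
   one root on each side of c. *)
Lemma roots_second_below (d : R) : d < Q nu c ->
  exists l, length l = 2%nat /\ roots_in (P d nu) (cut nu 1) (cut nu 2) l.
Proof.
  intros hd.
  assert (hPc : 0 < P d nu c).
  { rewrite P_factor by (apply sin_angle_second_neq, Hc).
    pose proof (sin_angle_second c Hc). nra. }
  assert (hP1 : P d nu (cut nu 1) < 0)
    by (rewrite P_at_cut; pose proof (sin_pos_second (cut nu 1)); unfold cut in *; lra).
  assert (hP2 : P d nu (cut nu 2) < 0)
    by (rewrite P_at_cut; pose proof (sin_pos_second (cut nu 2)); unfold cut in *; lra).
  destruct (ivt_strict (P d nu) (cut nu 1) c) as [r1 [hr1 hz1]];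
    [apply P_continuous | lra | nra |].
  destruct (ivt_strict (P d nu) c (cut nu 2)) as [r2 [hr2 hz2]];
    [apply P_continuous | lra | nra |].
  exists ([r1] ++ [r2]); split; [reflexivity|].
  apply (roots_in_app _ _ c); try lra.
  - apply roots_in_single; auto. intros s hs hzs.
    apply (level_set_unique (Q nu) (cut nu 1) c d); auto.
    + intros x y hx hxy hy. apply Rlt_not_eq, Q_increasing_before; lra.
    + apply root_level; auto. apply sin_angle_second_neq. lra.
    + apply root_level; auto. apply sin_angle_second_neq. lra.
  - apply roots_in_single; auto. intros s hs hzs.
    apply (level_set_unique (Q nu) c (cut nu 2) d); auto.
    + intros x y hx hxy hy. apply not_eq_sym, Rlt_not_eq, Q_decreasing_after; lra.
    + apply root_level; auto. apply sin_angle_second_neq. lra.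
    + apply root_level; auto. apply sin_angle_second_neq. lra.
Qed.

(* Above the maximum, P = sin(2σ + ν)(δ - Q) < 0 on the whole quarter. *)
Lemma roots_second_above (d : R) : Q nu c < d -> roots_in (P d nu) (cut nu 1) (cut nu 2) [].
Proof.
  intros hd. apply roots_in_nil. intros s hs.
  pose proof (sin_angle_second s hs). pose proof (Q_le_max s hs).
  rewrite P_factor by lra. nra.
Qed.

End SecondQuarter.

Lemma cut_le (j k : Z) : (j <= k)%Z -> cut nu j <= cut nu k.
Proof.
  intros hjk. apply IZR_le in hjk. pose proof PI_RGT_0.
  unfold cut. apply Rmult_le_compat_r; [lra|]. nra.
Qed.

(* Gluing the four quarters: the last two are the first two shifted by π,
   with δ replaced by -δ. *)
Lemma roots_assemble (d : R) (l0 l1 l2 l3 : list R) :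
  roots_in (P d nu) (cut nu 0) (cut nu 1) l0 ->
  roots_in (P d nu) (cut nu 1) (cut nu 2) l1 ->
  roots_in (P (-d) nu) (cut nu 0) (cut nu 1) l2 ->
  roots_in (P (-d) nu) (cut nu 1) (cut nu 2) l3 ->
  exactly_n_roots (fun s => P d nu s) (length l0 + length l1 + length l2 + length l3).
Proof.
  intros R0 R1 R2 R3. pose proof PI_RGT_0.
  assert (hshift : forall x, P d nu (x + PI) = - P (- d) nu x).
  { intros x. rewrite <- (Ropp_involutive d) at 1. apply P_shift_PI. }
  apply (roots_in_translate _ _ PI _ _ _ hshift) in R2.
  apply (roots_in_translate _ _ PI _ _ _ hshift) in R3.
  replace (cut nu 0 + PI) with (cut nu 2) in R2 by (unfold cut; lra).
  replace (cut nu 1 + PI) with (cut nu 3) in R2, R3 by (unfold cut; lra).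
  replace (cut nu 2 + PI) with (cut nu 0 + 2 * PI) in R3 by (unfold cut; lra).
  assert (R01 := roots_in_app _ _ _ _ _ _ (cut_le 0 1 ltac:(lia)) (cut_le 1 2 ltac:(lia))
                   (P_cut_nonzero d 1) R0 R1).
  assert (R012 := roots_in_app _ _ _ _ _ _ (cut_le 0 2 ltac:(lia)) (cut_le 2 3 ltac:(lia))
                    (P_cut_nonzero d 2) R01 R2).
  assert (h3 : cut nu 3 <= cut nu 0 + 2 * PI) by (unfold cut; lra).
  assert (Rall := roots_in_app _ _ _ _ _ _ (cut_le 0 3 ltac:(lia)) h3
                    (P_cut_nonzero d 3) R012 R3).
  apply exactly_n_roots_of_window in Rall.
  - rewrite !length_app, !length_map in Rall. exact Rall.
  - apply P_periodic.
  - unfold cut; lra.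
  - apply P_cut_nonzero.
Qed.

(* Root count for 0 < ν < π.  With M = Q(c) < 0 on the curve γ = 0, the sign
   of γ(δ, ν) is that of δ² - M²: in Ω₊ exactly one of δ, -δ lies below M
   (four roots), in Ω₋ neither does (two roots). *)
Lemma root_count_positive_nu (d : R) :
  (0 < gamma d nu -> exactly_n_roots (fun s => P d nu s) 4) /\
  (gamma d nu < 0 -> exactly_n_roots (fun s => P d nu s) 2).
Proof.
  destruct Qnum_sign_change_second as [c [hc [hc0 [hbefore hafter]]]].
  assert (hM : Q nu c < 0) by (apply Q_max_negative; auto).
  assert (hgM : gamma (Q nu c) nu = 0) by (apply Q_max_on_gamma; auto).
  assert (hsnu : 0 < sin nu ^ 2) by (pose proof (sin_gt_0 nu ltac:(lra) ltac:(lra)); nra).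
  destruct (cubic_sign_compare (sin nu ^ 2) ((Q nu c) ^ 2) (d ^ 2)) as [hgt hlt];
    [exact hsnu | nra | nra | unfold gamma in hgM; lra |].
  destruct (roots_first d) as [r0 R0]. destruct (roots_first (- d)) as [r2 R2].
  split; intros hg.
  - assert (hMd : (Q nu c) ^ 2 < d ^ 2) by (apply hgt; exact hg).
    assert (d < Q nu c \/ - d < Q nu c) as [h | h] by nra.
    + destruct (roots_second_below c hc hbefore hafter d h) as [l1 [hl1 R1]].
      pose proof (roots_second_above c hc hbefore hafter (- d) ltac:(lra)) as R3.
      pose proof (roots_assemble d _ _ _ _ R0 R1 R2 R3) as hcount. rewrite hl1 in hcount.
      exact hcount.
    + destruct (roots_second_below c hc hbefore hafter (- d) h) as [l3 [hl3 R3]].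
      pose proof (roots_second_above c hc hbefore hafter d ltac:(lra)) as R1.
      pose proof (roots_assemble d _ _ _ _ R0 R1 R2 R3) as hcount. rewrite hl3 in hcount.
      exact hcount.
  - assert (hdM : d ^ 2 < (Q nu c) ^ 2) by (apply hlt; exact hg).
    pose proof (roots_second_above c hc hbefore hafter d ltac:(nra)) as R1.
    pose proof (roots_second_above c hc hbefore hafter (- d) ltac:(nra)) as R3.
    exact (roots_assemble d _ _ _ _ R0 R1 R2 R3).
Qed.

End Quarters.

Lemma P_nu0 (d s : R) : P d 0 s = sin s * (2 * d * cos s - 1).
Proof. unfold P. rewrite Rplus_0_r, sin_2a. ring. Qed.

Lemma cos_level_in_period (u s : R) : -1 < u < 1 -> 0 <= s < 2 * PI -> cos s = u ->
  s = acos u \/ s = 2 * PI - acos u.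
Proof.
  intros hu hs hcos. pose proof (acos_bound_lt u hu).
  assert (hacos : cos (acos u) = u) by (apply cos_acos; lra).
  destruct (Rle_lt_dec s PI).
  - left. apply cos_inj; lra.
  - right. assert (2 * PI - s = acos u); [|lra].
    apply cos_inj; try lra. rewrite cos_minus, cos_2PI, sin_2PI. lra.
Qed.

Lemma cube_sign (x : R) : (0 < x ^ 3 -> 0 < x) /\ (x ^ 3 < 0 -> x < 0).
Proof.
  assert (hcube : x ^ 3 = x * (x * x)) by ring.
  assert (hsq : 0 <= x * x) by nra.
  split; intros h.
  - destruct (Rle_lt_dec x 0) as [hx | hx]; [exfalso | exact hx].
    assert (x * (x * x) <= 0) by nra. lra.
  - destruct (Rle_lt_dec 0 x) as [hx | hx]; [exfalso | exact hx].
    assert (0 <= x * (x * x)) by nra. lra.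
Qed.

(* For ν = 0 and 4δ² > 1 the roots are 0, π and the two solutions of
   cos σ = 1/(2δ). *)
Lemma root_count_nu0_large (d : R) : 1 < 4 * d ^ 2 -> exactly_n_roots (fun s => P d 0 s) 4.
Proof.
  intros hd. pose proof PI_RGT_0.
  set (u := / (2 * d)).
  assert (hdu : 2 * d * u = 1) by (unfold u; field; nra).
  assert (hu2 : 4 * d ^ 2 * (u * u) = 1)
    by (replace (4 * d ^ 2 * (u * u)) with ((2 * d * u) * (2 * d * u)) by ring;
        rewrite hdu; ring).
  assert (hu : -1 < u < 1) by (assert (u * u < 1) by nra; nra).
  pose proof (acos_bound_lt u hu).
  assert (hacos : cos (acos u) = u) by (apply cos_acos; lra).
  exists [0; acos u; PI; 2 * PI - acos u]; split; [reflexivity | split].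
  - repeat constructor; simpl; intuition lra.
  - intros s. rewrite P_nu0. simpl. split.
    + intros [<- | [<- | [<- | [<- | []]]]]; split; try lra.
      * rewrite sin_0; ring.
      * rewrite hacos, hdu; ring.
      * rewrite sin_PI; ring.
      * rewrite cos_minus, cos_2PI, sin_2PI, hacos. nra.
    + intros [hs hz]. destruct (Rmult_integral _ _ hz) as [hsin | hcos].
      * destruct (sin_zero_in_period s hs hsin) as [-> | ->]; tauto.
      * assert (cos s = u) by nra.
        destruct (cos_level_in_period u s hu hs) as [-> | ->]; tauto.
Qed.

(* For ν = 0 and 4δ² < 1 the factor 2δ cos σ - 1 never vanishes: the roots
   are 0 and π. *)
Lemma root_count_nu0_small (d : R) : 4 * d ^ 2 < 1 -> exactly_n_roots (fun s => P d 0 s) 2.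
Proof.
  intros hd. pose proof PI_RGT_0.
  exists [0; PI]; split; [reflexivity | split].
  - repeat constructor; simpl; intuition lra.
  - intros s. rewrite P_nu0. simpl. split.
    + intros [<- | [<- | []]]; split; try lra.
      * rewrite sin_0; ring.
      * rewrite sin_PI; ring.
    + intros [hs hz]. destruct (Rmult_integral _ _ hz) as [hsin | hcos].
      * destruct (sin_zero_in_period s hs hsin) as [-> | ->]; tauto.
      * exfalso. pose proof (COS_bound s).
        assert (4 * d ^ 2 * (cos s * cos s) = 1)
          by (replace (4 * d ^ 2 * (cos s * cos s)) with ((2 * d * cos s) * (2 * d * cos s))
                by ring; replace (2 * d * cos s) with 1 by lra; ring).
        assert (cos s * cos s <= 1) by nra. nra.
Qed.

Lemma root_count_nu0 (d : R) :
  (0 < gamma d 0 -> exactly_n_roots (fun s => P d 0 s) 4) /\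
  (gamma d 0 < 0 -> exactly_n_roots (fun s => P d 0 s) 2).
Proof.
  assert (hgamma : gamma d 0 = (4 * d ^ 2 - 1) ^ 3) by (unfold gamma; rewrite sin_0; ring).
  rewrite hgamma. split; intros hg.
  - apply root_count_nu0_large. apply (proj1 (cube_sign _)) in hg. lra.
  - apply root_count_nu0_small. apply (proj2 (cube_sign _)) in hg. lra.
Qed.

(* Off the curves γ_± every root is simple: a double root forces γ = 0, and
   δ = 0 has only the simple roots of sin. *)
Lemma simple_roots_off_gamma (d nu : R) : 0 <= nu < PI ->
  ~ (gamma_plus d nu \/ gamma_minus d nu) ->
  forall s, 0 <= s < 2 * PI -> P d nu s = 0 -> P1 d nu s <> 0.
Proof.
  intros hnu hoff s hs hP hP1. pose proof (double_root_on_gamma _ _ _ hP hP1) as hg.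
  destruct (Rtotal_order d 0) as [h | [-> | h]].
  - apply hoff; right; exact (conj hnu (conj hg h)).
  - unfold P, P1 in *. pose proof (sin2_cos2 s). unfold Rsqr in *. nra.
  - apply hoff; left; exact (conj hnu (conj hg h)).
Qed.

(* A triple root needs sin σ = sin(2σ + ν) = 0 (from P = P'' = 0), hence
   σ ∈ {0, π} and ν = 0; there P''' = -3 cos σ = ∓3. *)
Lemma triple_root_condition (d nu : R) : 0 <= nu < PI ->
  forall s, 0 <= s < 2 * PI -> P d nu s = 0 -> P1 d nu s = 0 -> P2 d nu s = 0 ->
  nu = 0 /\ sin s = 0 /\ P3 d nu s = - 3 * cos s /\ - 3 * cos s <> 0.
Proof.
  intros hnu s hs hP hP1 hP2. unfold P, P1, P2, P3 in *.
  assert (hsin : sin s = 0) by lra.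
  assert (hcos : cos s <> 0) by (intros h; pose proof (sin2_cos2 s); unfold Rsqr in *; nra).
  assert (hd : d <> 0) by (intros ->; lra).
  assert (hA : sin (2 * s + nu) = 0).
  { rewrite hsin in hP.
    destruct (Rmult_integral d (sin (2 * s + nu))); [lra | contradiction | assumption]. }
  assert (hsin_nu : sin nu = 0).
  { destruct (sin_zero_in_period s hs hsin) as [-> | ->].
    - rewrite Rmult_0_r, Rplus_0_l in hA. exact hA.
    - replace (2 * PI + nu) with (nu + 2 * INR 1 * PI) in hA by (simpl; ring).
      rewrite sin_period in hA. exact hA. }
  repeat split; try lra.
  destruct (Req_dec nu 0) as [h | h]; [exact h|].
  assert (0 < sin nu) by (apply sin_gt_0; lra). lra.
Qed.

Theorem mainTheorem1 (d nu : R) (Hnu : 0 <= nu < PI) :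
  (Omega_plus d nu -> exactly_n_roots (fun s => P d nu s) 4) /\
  (Omega_minus d nu -> exactly_n_roots (fun s => P d nu s) 2) /\
  (~ (gamma_plus d nu \/ gamma_minus d nu) ->
     forall s, 0 <= s < 2 * PI -> P d nu s = 0 -> P1 d nu s <> 0) /\
  (forall s, 0 <= s < 2 * PI -> P d nu s = 0 ->
     P1 d nu s = 0 -> P2 d nu s = 0 ->
     nu = 0 /\ sin s = 0 /\ P3 d nu s = - 3 * cos s /\ - 3 * cos s <> 0).
Proof.
  assert (hcount : (0 < gamma d nu -> exactly_n_roots (fun s => P d nu s) 4) /\
                   (gamma d nu < 0 -> exactly_n_roots (fun s => P d nu s) 2)).
  { destruct (Req_dec nu 0) as [-> | hnu0].
    - apply root_count_nu0.
    - apply root_count_positive_nu. lra. }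
  destruct hcount as [hcount4 hcount2].
  split; [intros [_ hg]; exact (hcount4 hg)|].
  split; [intros [_ hg]; exact (hcount2 hg)|].
  split; [apply simple_roots_off_gamma | apply triple_root_condition]; exact Hnu.
Qed.
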